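(* Let $u_n=(-1)^{s_2(n)}$, where $s_2(n)$ is the sum of the binary digits of $n$. Then \[\prod_{n=0}^\infty\left(\frac{(4n+3)(2n+2)}{(4n+5)(2n+3)}\right)^{u_n}=\frac{1}{\sqrt 2}.\]
   Context: $(u_n)_{n\ge0}$ is the Thue–Morse sequence with values $\pm1$: $u_n=1$ if the binary expansion of $n$ has an even number of $1$'s and $u_n=-1$ otherwise. Infinite products are the limits of their partial products. *)

From Stdlib Require Import Reals ZArith Lia Lra.
From Coquelicot Require Import Coquelicot.
Open Scope R_scope.

Fixpoint bin_digit_sum_fuel (fuel n : nat) : nat :=
  match fuel with
  | O => O
  | S f => match n with
           | O => O
           | _ => (Nat.modulo n 2 + bin_digit_sum_fuel f (Nat.div n 2))%nat
           end
  end.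

Definition s2 (n : nat) : nat := bin_digit_sum_fuel n n.

Definition tm (n : nat) : Z := if Nat.even (s2 n) then 1%Z else (-1)%Z.

Definition factor (n : nat) : R :=
  powerRZ (((4 * INR n + 3) * (2 * INR n + 2)) / ((4 * INR n + 5) * (2 * INR n + 3))) (tm n).

Fixpoint partial_prod (N : nat) : R :=
  match N with
  | O => 1
  | S k => partial_prod k * factor k
  end.

(* Taking logarithms, the n-th factor contributes
   u_n (ln(n+3/4) + ln(n+1) - ln(n+5/4) - ln(n+3/2)).  Grouped in blocks of four,
   each sum L(x) = sum_n u_n ln(n+x) converges (x >= 0): by u_{4j+r} = +-u_j a block is
   u_j (ln a - ln(a+1) - ln(a+2) + ln(a+3)), a second difference of ln, hence O(1/a^2).
   The recursion u_{2n} = u_n, u_{2n+1} = -u_n gives L(x) = L(x/2) - L((x+1)/2) for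
   x > 0, while at x = 0, where the n = 0 term is absent, it leaves an extra ln 2
   and gives L(1/2) = -ln 2.  Hence L(3/2) = L(3/4) - L(5/4) and L(1) = L(1/2)/2, so the
   logarithm of the product is L(3/4) + L(1) - L(5/4) - L(3/2) = L(1) = -ln 2 / 2. *)

From Stdlib Require Import Reals Lra Lia.
From Coquelicot Require Import Coquelicot.
Open Scope R_scope.

Lemma bin_digit_sum_fuel_irrelevant f g n :
  (n <= f)%nat -> (n <= g)%nat -> bin_digit_sum_fuel f n = bin_digit_sum_fuel g n.
Proof.
  revert g n; induction f as [|f IH]; intros g n Hf Hg.
  - replace n with 0%nat by lia; destruct g; reflexivity.
  - destruct g as [|g]; [replace n with 0%nat by lia; reflexivity|].
    destruct n as [|n]; [reflexivity|].
    cbn [bin_digit_sum_fuel].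
    assert (S n / 2 < S n)%nat by (apply Nat.div_lt; lia).
    rewrite (IH g) by lia; reflexivity.
Qed.

Lemma s2_div2 n : s2 n = (n mod 2 + s2 (n / 2))%nat.
Proof.
  destruct n as [|n]; [reflexivity|].
  assert (S n / 2 < S n)%nat by (apply Nat.div_lt; lia).
  unfold s2; cbn [bin_digit_sum_fuel].
  rewrite (bin_digit_sum_fuel_irrelevant n (S n / 2)) by lia; reflexivity.
Qed.

Lemma s2_double k : s2 (2 * k) = s2 k.
Proof.
  rewrite s2_div2, Nat.mul_comm, Nat.Div0.mod_mul, Nat.div_mul by lia; reflexivity.
Qed.

Lemma s2_double_add1 k : s2 (2 * k + 1) = S (s2 k).
Proof.
  rewrite s2_div2, (Nat.add_comm (2 * k)), (Nat.mul_comm 2 k).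
  rewrite Nat.Div0.mod_add, Nat.div_add by lia; reflexivity.
Qed.

Definition u (n : nat) : R := IZR (tm n).

Lemma u_double k : u (2 * k) = u k.
Proof. unfold u, tm; rewrite s2_double; reflexivity. Qed.

Lemma u_double_add1 k : u (2 * k + 1) = - u k.
Proof.
  unfold u, tm; rewrite s2_double_add1, Nat.even_succ, <- Nat.negb_even.
  destruct (Nat.even (s2 k)); simpl; lra.
Qed.

Lemma Rabs_u n : Rabs (u n) = 1.
Proof. unfold u, tm; destruct (Nat.even (s2 n)); [apply Rabs_R1 | apply Rabs_m1]. Qed.

Fixpoint tm_sum (g : nat -> R) (N : nat) : R :=
  match N with
  | O => 0
  | S k => tm_sum g k + u k * g k
  end.

Lemma tm_sum_ext f g N : (forall k, f k = g k) -> tm_sum f N = tm_sum g N.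
Proof. intros Hfg; induction N as [|N IH]; simpl; [|rewrite IH, Hfg]; reflexivity. Qed.

Lemma tm_sum_plus f g N :
  tm_sum (fun k => f k + g k) N = tm_sum f N + tm_sum g N.
Proof. induction N as [|N IH]; simpl; [|rewrite IH]; ring. Qed.

Lemma tm_sum_minus f g N :
  tm_sum (fun k => f k - g k) N = tm_sum f N - tm_sum g N.
Proof. induction N as [|N IH]; simpl; [|rewrite IH]; ring. Qed.

Lemma tm_sum_double g N :
  tm_sum g (2 * N) = tm_sum (fun k => g (2 * k)%nat - g (2 * k + 1)%nat) N.
Proof.
  induction N as [|N IH]; [reflexivity|].
  replace (2 * S N)%nat with (S (2 * N + 1)) by lia; cbn [tm_sum].
  replace (2 * N + 1)%nat with (S (2 * N)) at 1 by lia; cbn [tm_sum].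
  rewrite IH, u_double; replace (S (2 * N)) with (2 * N + 1)%nat by lia.
  rewrite u_double_add1; ring.
Qed.

Lemma tm_sum_quadruple g N :
  tm_sum g (4 * N) =
  tm_sum (fun j => g (4 * j)%nat - g (4 * j + 1)%nat - g (4 * j + 2)%nat + g (4 * j + 3)%nat) N.
Proof.
  replace (4 * N)%nat with (2 * (2 * N))%nat by lia.
  rewrite !tm_sum_double; apply tm_sum_ext; intros j; cbv beta.
  replace (2 * (2 * j) + 1)%nat with (4 * j + 1)%nat by lia.
  replace (2 * (2 * j + 1) + 1)%nat with (4 * j + 3)%nat by lia.
  replace (2 * (2 * j))%nat with (4 * j)%nat by lia.
  replace (2 * (2 * j + 1))%nat with (4 * j + 2)%nat by lia.
  ring.
Qed.

Lemma ln_le_sub1 y : 0 < y -> ln y <= y - 1.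
Proof.
  intros Hy; rewrite <- (ln_exp (y - 1)).
  apply ln_le; [exact Hy|]; pose proof (exp_ineq1_le (y - 1)); lra.
Qed.

Lemma ln_succ_sub_bounds y : 0 < y -> 1 / (y + 1) <= ln (y + 1) - ln y <= 1 / y.
Proof.
  intros Hy; split.
  - pose proof (ln_le_sub1 (y / (y + 1)) ltac:(apply Rdiv_lt_0_compat; lra)) as H.
    rewrite ln_div in H by lra.
    replace (y / (y + 1) - 1) with (- (1 / (y + 1))) in H by (field; lra); lra.
  - pose proof (ln_le_sub1 ((y + 1) / y) ltac:(apply Rdiv_lt_0_compat; lra)) as H.
    rewrite ln_div in H by lra.
    replace ((y + 1) / y - 1) with (1 / y) in H by (field; lra); lra.
Qed.

(* [s + c] decreases, [s - c] increases, both stay in [[s 0 - c 0, s 0 + c 0]],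
   and [s] is their average. *)
Lemma ex_finite_lim_seq_increment_bound (s c : nat -> R) :
  (forall n, 0 <= c n) -> (forall n, Rabs (s (S n) - s n) <= c n - c (S n)) ->
  ex_finite_lim_seq s.
Proof.
  intros Hc Hinc.
  assert (Hdecr : forall n, s (S n) + c (S n) <= s n + c n)
    by (intros n; specialize (Hinc n); apply Rabs_le_between in Hinc; lra).
  assert (Hincr : forall n, s n - c n <= s (S n) - c (S n))
    by (intros n; specialize (Hinc n); apply Rabs_le_between in Hinc; lra).
  assert (Hup : forall n, s n + c n <= s 0%nat + c 0%nat)
    by (induction n as [|n IH]; [lra|]; specialize (Hdecr n); lra).
  assert (Hlow : forall n, s 0%nat - c 0%nat <= s n - c n)
    by (induction n as [|n IH]; [lra|]; specialize (Hincr n); lra).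
  destruct (ex_finite_lim_seq_decr (fun n => s n + c n) (s 0%nat - c 0%nat) Hdecr)
    as [lp Hp].
  { intros n; specialize (Hlow n); specialize (Hc n); lra. }
  destruct (ex_finite_lim_seq_incr (fun n => s n - c n) (s 0%nat + c 0%nat) Hincr)
    as [lm Hm].
  { intros n; specialize (Hup n); specialize (Hc n); lra. }
  exists ((lp + lm) / 2).
  eapply is_lim_seq_ext; [|apply (is_lim_seq_scal_r _ (/ 2) _ (is_lim_seq_plus' _ _ _ _ Hp Hm))].
  intros n; simpl; field.
Qed.

Lemma is_lim_seq_unique_real (v : nat -> R) (a b : R) :
  is_lim_seq v a -> is_lim_seq v b -> a = b.
Proof.
  intros Ha Hb; apply Rbar_finite_eq.
  rewrite <- (is_lim_seq_unique _ _ Ha), <- (is_lim_seq_unique _ _ Hb); reflexivity.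
Qed.

Lemma is_lim_seq_of_residues (s : nat -> R) (k : nat) (l : R) : (0 < k)%nat ->
  (forall r, (r < k)%nat -> is_lim_seq (fun M => s (k * M + r)%nat) l) ->
  is_lim_seq s l.
Proof.
  intros Hk Hres; apply is_lim_seq_spec; intros eps.
  assert (Huniform : forall m, (m <= k)%nat -> exists N, forall r M,
             (r < m)%nat -> (N <= M)%nat -> Rabs (s (k * M + r)%nat - l) < eps).
  { induction m as [|m IH]; intros Hm; [exists 0%nat; intros; lia|].
    destruct (IH ltac:(lia)) as [N HN].
    destruct (proj2 (is_lim_seq_spec _ _) (Hres m ltac:(lia)) eps) as [N' HN'].
    exists (N + N')%nat; intros r M Hr HM.
    destruct (Nat.eq_dec r m) as [->|Hrm]; [apply HN'|apply HN]; lia. }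
  destruct (Huniform k (le_n k)) as [N HN]; exists (k * N)%nat; intros n Hn.
  rewrite (Nat.div_mod n k) by lia; apply HN.
  - apply Nat.mod_upper_bound; lia.
  - apply Nat.div_le_lower_bound; lia.
Qed.

Lemma is_lim_seq_of_blocks (s : nat -> R) (k : nat) (l : R) : (0 < k)%nat ->
  is_lim_seq (fun M => s (k * M)%nat) l ->
  is_lim_seq (fun n => s (S n) - s n) 0 ->
  is_lim_seq s l.
Proof.
  intros Hk Hblocks Hinc; apply (is_lim_seq_of_residues s k l Hk); intros r _.
  induction r as [|r IH].
  - eapply is_lim_seq_ext; [|exact Hblocks]; intros M; rewrite Nat.add_0_r; reflexivity.
  - assert (Hstep : is_lim_seq (fun M => s (S (k * M + r)) - s (k * M + r)%nat) 0).
    { apply (is_lim_seq_subseq (fun n => s (S n) - s n) _ (fun M => k * M + r)%nat);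
        [apply eventually_subseq; intros; lia | exact Hinc]. }
    replace l with (l + 0) by ring.
    eapply is_lim_seq_ext; [|exact (is_lim_seq_plus' _ _ _ _ IH Hstep)].
    intros M; simpl; rewrite Nat.add_succ_r; ring.
Qed.

Definition ln_block (a : R) : R := ln a - ln (a + 1) - ln (a + 2) + ln (a + 3).

Lemma Rabs_ln_block_le a : 0 < a -> Rabs (ln_block a) <= 1 / a - 1 / (a + 4).
Proof.
  intros Ha; unfold ln_block.
  destruct (ln_succ_sub_bounds a Ha) as [A1 A2].
  destruct (ln_succ_sub_bounds (a + 2) ltac:(lra)) as [B1 B2].
  replace (a + 2 + 1) with (a + 3) in B1, B2 by ring.
  assert (1 / (a + 2) <= 1 / (a + 1)) by (apply Rmult_le_compat_l, Rinv_le_contravar; lra).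
  assert (1 / (a + 4) <= 1 / (a + 3)) by (apply Rmult_le_compat_l, Rinv_le_contravar; lra).
  apply Rabs_le; lra.
Qed.

Definition tm_log_sum (x : R) : nat -> R := tm_sum (fun k => ln (INR k + x)).

Lemma INR_affine a j b : INR (a * j + b) = INR a * INR j + INR b.
Proof. rewrite plus_INR, mult_INR; reflexivity. Qed.

Lemma tm_log_sum_quadruple x N :
  tm_log_sum x (4 * N) = tm_sum (fun j => ln_block (4 * INR j + x)) N.
Proof.
  unfold tm_log_sum; rewrite tm_sum_quadruple; apply tm_sum_ext; intros j.
  unfold ln_block; rewrite !INR_affine, mult_INR; simpl INR.
  replace ((1 + 1 + 1 + 1) * INR j + x) with (4 * INR j + x) by ring.
  replace ((1 + 1 + 1 + 1) * INR j + 1 + x) with (4 * INR j + x + 1) by ring.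
  replace ((1 + 1 + 1 + 1) * INR j + (1 + 1) + x) with (4 * INR j + x + 2) by ring.
  replace ((1 + 1 + 1 + 1) * INR j + (1 + 1 + 1) + x) with (4 * INR j + x + 3) by ring.
  reflexivity.
Qed.

Lemma ln_double_split k x : 0 < 2 * INR k + x ->
  ln (INR (2 * k) + x) - ln (INR (2 * k + 1) + x) =
  ln (INR k + x / 2) - ln (INR k + (x + 1) / 2).
Proof.
  intros Hkx; rewrite INR_affine, mult_INR; simpl INR.
  replace ((1 + 1) * INR k + x) with (2 * (INR k + x / 2)) by field.
  replace ((1 + 1) * INR k + 1 + x) with (2 * (INR k + (x + 1) / 2)) by field.
  rewrite !ln_mult by lra; ring.
Qed.

Lemma tm_log_sum_double x N : 0 < x ->
  tm_log_sum x (2 * N) = tm_log_sum (x / 2) N - tm_log_sum ((x + 1) / 2) N.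
Proof.
  intros Hx; unfold tm_log_sum; rewrite tm_sum_double, <- tm_sum_minus.
  apply tm_sum_ext; intros k; apply ln_double_split.
  pose proof (pos_INR k); lra.
Qed.

(* At [x = 0] the [n = 0] term [ln 0] is junk ([= 0]), which breaks the
   splitting of [ln (2 * 0)] and leaves the extra [- ln 2]. *)
Lemma tm_log_sum_double_0 N :
  tm_log_sum 0 (2 * S N) = tm_log_sum 0 (S N) - tm_log_sum (1 / 2) (S N) - ln 2.
Proof.
  unfold tm_log_sum; rewrite tm_sum_double, <- tm_sum_minus.
  induction N as [|N IH].
  - cbn [tm_sum]; replace (u 0) with 1 by reflexivity; simpl INR.
    replace (0 + 0) with 0 by ring; replace (0 + 1 / 2) with (/ 2) by field.
    replace (1 + 0) with 1 by ring.
    rewrite ln_1, ln_Rinv by lra; ring.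
  - cbn [tm_sum] in IH |- *; rewrite IH, ln_double_split.
    + replace (0 / 2) with 0 by field; replace ((0 + 1) / 2) with (1 / 2) by field; ring.
    + pose proof (pos_INR N); rewrite S_INR; lra.
Qed.

Lemma ex_finite_lim_tm_log_sum x : 0 <= x ->
  ex_finite_lim_seq (fun M => tm_log_sum x (4 * M)).
Proof.
  intros Hx.
  assert (Hshift : ex_finite_lim_seq (fun M => tm_log_sum x (4 * S M))).
  { apply (ex_finite_lim_seq_increment_bound _ (fun M => 1 / (4 * INR (S M) + x))).
    - intros M; pose proof (pos_INR M); rewrite S_INR.
      apply Rlt_le, Rdiv_lt_0_compat; lra.
    - intros M; rewrite !tm_log_sum_quadruple; cbn [tm_sum].
      replace (_ + _ - _) with (u (S M) * ln_block (4 * INR (S M) + x)) by ring.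
      rewrite Rabs_mult, Rabs_u, Rmult_1_l, (S_INR (S M)).
      replace (4 * (INR (S M) + 1) + x) with (4 * INR (S M) + x + 4) by ring.
      apply Rabs_ln_block_le; pose proof (pos_INR M); rewrite S_INR; lra. }
  destruct Hshift as [l Hl]; exists l; apply is_lim_seq_incr_1; exact Hl.
Qed.

Definition tm_log_lim (x : R) : R := real (Lim_seq (fun M => tm_log_sum x (4 * M))).

Lemma is_lim_tm_log_sum x : 0 <= x ->
  is_lim_seq (fun M => tm_log_sum x (4 * M)) (tm_log_lim x).
Proof.
  intros Hx; apply Lim_seq_correct', ex_finite_lim_tm_log_sum, Hx.
Qed.

Lemma tm_log_lim_double x : 0 < x ->
  tm_log_lim x = tm_log_lim (x / 2) - tm_log_lim ((x + 1) / 2).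
Proof.
  intros Hx.
  apply (is_lim_seq_unique_real (fun M => tm_log_sum x (4 * (2 * M)))).
  - apply (is_lim_seq_subseq (fun M => tm_log_sum x (4 * M)) _ (fun M => 2 * M)%nat).
    + apply eventually_subseq; intros; lia.
    + apply is_lim_tm_log_sum; lra.
  - eapply is_lim_seq_ext;
      [|exact (is_lim_seq_minus' _ _ _ _ (is_lim_tm_log_sum (x / 2) ltac:(lra))
                                         (is_lim_tm_log_sum ((x + 1) / 2) ltac:(lra)))].
    intros M; simpl; rewrite <- tm_log_sum_double by exact Hx.
    f_equal; lia.
Qed.

Lemma tm_log_lim_half : tm_log_lim (1 / 2) = - ln 2.
Proof.
  cut (tm_log_lim 0 = tm_log_lim 0 - tm_log_lim (1 / 2) - ln 2); [lra|].
  apply (is_lim_seq_unique_real (fun M => tm_log_sum 0 (4 * (2 * S M)))).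
  - apply (is_lim_seq_subseq (fun M => tm_log_sum 0 (4 * M)) _ (fun M => 2 * S M)%nat).
    + apply eventually_subseq; intros; lia.
    + apply is_lim_tm_log_sum; lra.
  - apply (is_lim_seq_ext (fun M => tm_log_sum 0 (4 * S M) - tm_log_sum (1 / 2) (4 * S M) - ln 2)).
    { intros M; replace (4 * (2 * S M))%nat with (2 * S (4 * M + 3))%nat by lia.
      rewrite tm_log_sum_double_0; replace (S (4 * M + 3)) with (4 * S M)%nat by lia.
      reflexivity. }
    apply is_lim_seq_minus'; [apply is_lim_seq_minus'|apply is_lim_seq_const];
      apply (is_lim_seq_incr_1 (fun M => tm_log_sum _ (4 * M))), is_lim_tm_log_sum; lra.
Qed.

Definition ratio (n : nat) : R :=
  ((4 * INR n + 3) * (2 * INR n + 2)) / ((4 * INR n + 5) * (2 * INR n + 3)).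

Lemma ratio_pos n : 0 < ratio n.
Proof.
  unfold ratio; pose proof (pos_INR n).
  apply Rdiv_lt_0_compat; apply Rmult_lt_0_compat; lra.
Qed.

Lemma ln_ratio n : ln (ratio n) =
  ln (INR n + 3 / 4) + ln (INR n + 1) - ln (INR n + 5 / 4) - ln (INR n + 3 / 2).
Proof.
  pose proof (pos_INR n).
  replace (ratio n) with (((INR n + 3 / 4) * (INR n + 1)) / ((INR n + 5 / 4) * (INR n + 3 / 2)))
    by (unfold ratio; field; lra).
  rewrite ln_div, !ln_mult by (try apply Rmult_lt_0_compat; lra); ring.
Qed.

Lemma Rabs_ln_ratio_le n : Rabs (ln (ratio n)) <= 2 / (INR n + 1).
Proof.
  pose proof (pos_INR n); pose proof (ratio_pos n) as Hpos.
  assert (Hle1 : ratio n <= 1).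
  { unfold ratio; rewrite <- Rdiv_le_1 by (apply Rmult_lt_0_compat; lra); nra. }
  assert (Hneg : ln (ratio n) <= 0) by (rewrite <- ln_1; apply ln_le; lra).
  pose proof (ln_le_sub1 (/ ratio n) ltac:(apply Rinv_0_lt_compat, Hpos)) as Hinv.
  rewrite ln_Rinv in Hinv by exact Hpos.
  assert (/ ratio n - 1 <= 2 / (INR n + 1)).
  { replace (/ ratio n - 1) with ((8 * INR n + 9) / ((4 * INR n + 3) * (2 * INR n + 2)))
      by (unfold ratio; field; lra).
    apply Rle_div_l; [apply Rmult_lt_0_compat; lra|].
    replace (2 / (INR n + 1) * ((4 * INR n + 3) * (2 * INR n + 2))) with (4 * (4 * INR n + 3))
      by (field; lra).
    lra. }
  rewrite Rabs_left1 by exact Hneg; lra.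
Qed.

Definition log_partial_prod : nat -> R := tm_sum (fun n => ln (ratio n)).

Lemma log_partial_prod_split N : log_partial_prod N =
  tm_log_sum (3 / 4) N + tm_log_sum 1 N - tm_log_sum (5 / 4) N - tm_log_sum (3 / 2) N.
Proof.
  unfold log_partial_prod, tm_log_sum; rewrite <- tm_sum_plus, <- !tm_sum_minus.
  apply tm_sum_ext; intros n; apply ln_ratio.
Qed.

Lemma partial_prod_exp N : partial_prod N = exp (log_partial_prod N).
Proof.
  induction N as [|N IH]; [symmetry; apply exp_0|].
  unfold log_partial_prod in *; simpl; rewrite IH, exp_plus; f_equal.
  pose proof (ratio_pos N) as Hpos; unfold factor, u, tm; fold (ratio N).
  destruct (Nat.even (s2 N)); simpl powerRZ.
  - rewrite Rmult_1_l, exp_ln by exact Hpos; ring.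
  - replace (-1 * ln (ratio N)) with (- ln (ratio N)) by ring.
    rewrite exp_Ropp, exp_ln, Rmult_1_r by exact Hpos; reflexivity.
Qed.

Lemma is_lim_log_partial_prod_blocks :
  is_lim_seq (fun M => log_partial_prod (4 * M)) (- ln 2 / 2).
Proof.
  assert (H1 := tm_log_lim_double 1 ltac:(lra)).
  assert (H32 := tm_log_lim_double (3 / 2) ltac:(lra)).
  replace ((1 + 1) / 2) with 1 in H1 by field.
  replace (3 / 2 / 2) with (3 / 4) in H32 by field.
  replace ((3 / 2 + 1) / 2) with (5 / 4) in H32 by field.
  replace (- ln 2 / 2) with
    (tm_log_lim (3 / 4) + tm_log_lim 1 - tm_log_lim (5 / 4) - tm_log_lim (3 / 2))
    by (rewrite <- tm_log_lim_half; lra).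
  eapply is_lim_seq_ext; [intros M; symmetry; apply log_partial_prod_split|].
  repeat apply is_lim_seq_minus'; try apply is_lim_seq_plus';
    apply is_lim_tm_log_sum; lra.
Qed.

Lemma is_lim_tm_ln_ratio : is_lim_seq (fun n => u n * ln (ratio n)) 0.
Proof.
  apply is_lim_seq_abs_0.
  apply (is_lim_seq_le_le (fun _ => 0) _ (fun n => 2 / (INR n + 1))).
  - intros n; rewrite Rabs_mult, Rabs_u, Rmult_1_l.
    split; [apply Rabs_pos | apply Rabs_ln_ratio_le].
  - apply is_lim_seq_const.
  - assert (Hsucc : is_lim_seq (fun n => INR n + 1) p_infty).
    { apply (is_lim_seq_plus _ _ _ _ _ is_lim_seq_INR (is_lim_seq_const 1)); reflexivity. }
    apply (is_lim_seq_ext (fun n => 2 * / (INR n + 1))); [reflexivity|].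
    replace (Finite 0) with (Rbar_mult 2 (Rbar_inv p_infty)) by (simpl; f_equal; ring).
    apply is_lim_seq_scal_l, is_lim_seq_inv; [exact Hsucc | discriminate].
Qed.

Theorem mainTheorem3 :
  is_lim_seq partial_prod (1 / sqrt 2).
Proof.
  assert (Hvalue : 1 / sqrt 2 = exp (- ln 2 / 2)).
  { rewrite <- Rpower_sqrt by lra; unfold Rdiv at 1; rewrite Rmult_1_l, <- Rpower_Ropp.
    unfold Rpower; f_equal; field. }
  assert (Hlog : is_lim_seq log_partial_prod (- ln 2 / 2)).
  { apply (is_lim_seq_of_blocks _ 4); [lia | exact is_lim_log_partial_prod_blocks|].
    eapply is_lim_seq_ext; [|exact is_lim_tm_ln_ratio].
    intros n; unfold log_partial_prod; simpl; ring. }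
  rewrite Hvalue; apply (is_lim_seq_ext (fun N => exp (log_partial_prod N))).
  - intros N; symmetry; apply partial_prod_exp.
  - apply is_lim_seq_continuous; [apply derivable_continuous_pt, derivable_pt_exp | exact Hlog].
Qed.
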